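(* Given an $n$-qubit state $\lvert\psi\rangle$, let $\lvert\phi\rangle$ be a stabilizer state that maximizes the stabilizer fidelity, and let $S^* = \mathrm{Weyl}(\lvert\phi\rangle)$. Then \[\sum_{x \in S^*} p_\psi(x) \geq F_\mathcal{S}(\lvert\psi\rangle)^2.\]
   Context: For $x=(a,b)\in\mathbb F_2^{2n}$ the Weyl operator is $W_x = i^{a\cdot b}X^{a_1}Z^{b_1}\otimes\cdots\otimes X^{a_n}Z^{b_n}$; $p_\psi(x)=2^{-n}\langle\psi|W_x|\psi\rangle^2$; $\mathrm{Weyl}(\lvert\phi\rangle)=\{x\in\mathbb F_2^{2n}: W_x\lvert\phi\rangle=\pm\lvert\phi\rangle\}$; $F_\mathcal{S}(\lvert\psi\rangle)=\max_{\lvert\phi\rangle\text{ stabilizer}}\lvert\langle\phi|\psi\rangle\rvert^2$. *)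

From HB Require Import structures.
From mathcomp Require Import all_boot all_order all_algebra.
From mathcomp Require Import reals complex.

Set Implicit Arguments.
Unset Strict Implicit.
Unset Printing Implicit Defensive.

Import Order.TTheory GRing.Theory Num.Theory.
Local Open Scope ring_scope.
Local Open Scope complex_scope.

Definition bits (n : nat) := {ffun 'I_n -> bool}.

(* Vectors of the n-qubit Hilbert space (C^2)^{(x) n}, in the computational basis.
   Scalars are R[i], the complex numbers over a real field R. *)
Definition qvec (R : realType) (n : nat) := {ffun bits n -> R[i]}.

(* Linear operators on n qubits, given by their matrix entries <r|M|c>. *)
Definition qop (R : realType) (n : nat) := bits n -> bits n -> R[i].
Definition qop1 (R : realType) := bool -> bool -> R[i].

Definition id1 (R : realType) : qop1 R := fun r c => (r == c)%:R.
Definition pauliX (R : realType) : qop1 R := fun r c => (r != c)%:R.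
Definition pauliZ (R : realType) : qop1 R :=
  fun r c => (r == c)%:R * (if c then -1 else 1).
Definition hadamard (R : realType) : qop1 R :=
  fun r c => (if r && c then -1 else 1) / (Num.sqrt (2 : R))%:C.
Definition phaseS (R : realType) : qop1 R :=
  fun r c => (r == c)%:R * (if c then 'i else 1).

Definition mul1 (R : realType) (A B : qop1 R) : qop1 R :=
  fun r c => \sum_(k : bool) A r k * B k c.

Definition tens (R : realType) (n : nat) (A : 'I_n -> qop1 R) : qop R n :=
  fun r c => \prod_(j < n) A j (r j) (c j).

Definition qid (R : realType) (n : nat) : qop R n := fun r c => (r == c)%:R.

Definition qmul (R : realType) (n : nat) (A B : qop R n) : qop R n :=
  fun r c => \sum_(m : bits n) A r m * B m c.

Definition qapply (R : realType) (n : nat) (M : qop R n) (v : qvec R n) : qvec R n :=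
  [ffun r => \sum_(c : bits n) M r c * v c].

Definition braket (R : realType) (n : nat) (u v : qvec R n) : R[i] :=
  \sum_(z : bits n) (u z)^* * v z.

Definition is_state (R : realType) (n : nat) (psi : qvec R n) : Prop :=
  braket psi psi = 1.

(* a . b for a, b in F_2^n, computed as an integer (number of common 1's). *)
Definition bdot (n : nat) (a b : bits n) : nat := #|[set j : 'I_n | a j && b j]|.

(* Weyl operator W_x = i^{a.b} X^{a_1}Z^{b_1} (x) ... (x) X^{a_n}Z^{b_n}, x = (a,b). *)
Definition weyl (R : realType) (n : nat) (x : bits n * bits n) : qop R n :=
  fun r c => 'i ^+ (bdot x.1 x.2) *
    tens (fun j => mul1 (if x.1 j then pauliX R else id1 R)
                        (if x.2 j then pauliZ R else id1 R)) r c.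

Definition p_psi (R : realType) (n : nat) (psi : qvec R n) (x : bits n * bits n) : R[i] :=
  (2%:R ^+ n)^-1 * (braket psi (qapply (weyl R x) psi)) ^+ 2.

Definition weyl_set (R : realType) (n : nat) (phi : qvec R n) : {set bits n * bits n} :=
  [set x | (qapply (weyl R x) phi == phi) || (qapply (weyl R x) phi == - phi)].

Definition gate1 (R : realType) (n : nat) (k : 'I_n) (G : qop1 R) : qop R n :=
  tens (fun j => if j == k then G else id1 R).

Definition cnot_map (n : nat) (k l : 'I_n) (c : bits n) : bits n :=
  [ffun j => if j == l then c l (+) c k else c j].

Definition cnot (R : realType) (n : nat) (k l : 'I_n) : qop R n :=
  fun r c => (r == cnot_map k l c)%:R.

Inductive clifford (R : realType) (n : nat) : qop R n -> Prop :=
| clifford_id : clifford (@qid R n)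
| clifford_H (k : 'I_n) U : clifford U -> clifford (qmul (gate1 k (hadamard R)) U)
| clifford_S (k : 'I_n) U : clifford U -> clifford (qmul (gate1 k (phaseS R)) U)
| clifford_CNOT (k l : 'I_n) U : k != l -> clifford U -> clifford (qmul (cnot R k l) U).

Definition ket0 (R : realType) (n : nat) : qvec R n :=
  [ffun z => (z == [ffun => false])%:R].

Definition stabilizer_state (R : realType) (n : nat) (phi : qvec R n) : Prop :=
  exists (U : qop R n) (c : R[i]),
    clifford U /\ `|c| = 1 /\ phi = c *: qapply U (@ket0 R n).

Definition fidelity (R : realType) (n : nat) (phi psi : qvec R n) : R[i] :=
  `|braket phi psi| ^+ 2.

Definition stab_fidelity_maximizer (R : realType) (n : nat) (psi phi : qvec R n) : Prop :=
  stabilizer_state phi /\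
  forall phi', stabilizer_state phi' -> fidelity phi' psi <= fidelity phi psi.

From HB Require Import structures.
From mathcomp Require Import all_boot all_order all_algebra.
From mathcomp Require Import boolp reals complex ring.
Import Order.TTheory GRing.Theory Num.Theory.
Set Implicit Arguments.
Unset Strict Implicit.
Local Open Scope ring_scope.

(* A Clifford circuit U conjugates Weyl operators to Weyl operators up to a
   phase, through an injective relabelling g.  The Z-type operators Z_b fix
   |0^n>, so every g(0,b) lies in Weyl(U|0^n>), and p_psi(g(0,b)) equals
   p_chi(0,b) for chi = U^dagger psi.  By Parseval over the characters
   b |-> (-1)^(b.z), the sum of p_chi(0,b) over b is sum_z |chi_z|^4, which
   is at least |chi_0|^4 = |<phi|psi>|^4. *)

Lemma ler_sum_subset (C : numDomainType) (T : finType) (A B : {set T}) (F : T -> C) :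
  A \subset B -> (forall x, x \in B -> 0 <= F x) ->
  \sum_(x in A) F x <= \sum_(x in B) F x.
Proof.
move=> AB F_ge0; rewrite [leRHS](big_setID A) /= (setIidPr AB) lerDl.
by apply: sumr_ge0 => x /setDP [xB _]; exact: F_ge0.
Qed.

Section Delta.
Variables (S : pzSemiRingType) (T : finType).

Lemma sum_delta (a : T) (F : T -> S) : \sum_(m : T) (m == a)%:R * F m = F a.
Proof.
rewrite (bigD1 a) //= eqxx mul1r big1 ?addr0 // => m /negbTE ->.
by rewrite mul0r.
Qed.

Lemma sum_delta_sym (a : T) (F : T -> S) : \sum_(m : T) (a == m)%:R * F m = F a.
Proof. by under eq_bigr do rewrite eq_sym; exact: sum_delta. Qed.

End Delta.

Section Weyl.
Variables (R : realType) (n : nat).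
Local Notation C := R[i].
Local Notation qop := (qop R n).
Local Notation qop1 := (qop1 R).

Definition qadj (M : qop) : qop := fun r c => (M c r)^*.
Definition qadj1 (A : qop1) : qop1 := fun r c => (A c r)^*.
Definition qscale (a : C) (M : qop) : qop := fun r c => a * M r c.
Definition unitary_op (U : qop) :=
  qmul U (qadj U) = @qid R n /\ qmul (qadj U) U = @qid R n.

Lemma qop_ext (A B : qop) : (forall r c, A r c = B r c) -> A = B.
Proof. by move=> AB; apply/funext => r; apply/funext => c; exact: AB. Qed.

Lemma qmulA (A B D : qop) : qmul (qmul A B) D = qmul A (qmul B D).
Proof.
apply: qop_ext => r c; rewrite /qmul.
under eq_bigr do rewrite big_distrl /=.
under [RHS]eq_bigr do rewrite big_distrr /=.
rewrite exchange_big /=; apply: eq_bigr => i _; apply: eq_bigr => j _.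
by rewrite mulrA.
Qed.

Lemma qmul1q (A : qop) : qmul (@qid R n) A = A.
Proof. by apply: qop_ext => r c; rewrite /qmul /qid sum_delta_sym. Qed.

Lemma qmulq1 (A : qop) : qmul A (@qid R n) = A.
Proof.
apply: qop_ext => r c; rewrite /qmul /qid.
by under eq_bigr do rewrite mulrC; rewrite sum_delta.
Qed.

Lemma qadj_mul (A B : qop) : qadj (qmul A B) = qmul (qadj B) (qadj A).
Proof.
apply: qop_ext => r c; rewrite /qadj /qmul rmorph_sum; apply: eq_bigr => m _.
by rewrite rmorphM mulrC.
Qed.

Lemma qadj_qid : qadj (@qid R n) = @qid R n.
Proof. by apply: qop_ext => r c; rewrite /qadj /qid rmorph_nat eq_sym. Qed.

Lemma qmul_scalel a (A B : qop) : qmul (qscale a A) B = qscale a (qmul A B).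
Proof.
apply: qop_ext => r c; rewrite /qmul /qscale big_distrr.
by apply: eq_bigr => m _; rewrite /= mulrA.
Qed.

Lemma qmul_scaler a (A B : qop) : qmul A (qscale a B) = qscale a (qmul A B).
Proof.
apply: qop_ext => r c; rewrite /qmul /qscale big_distrr.
by apply: eq_bigr => m _; rewrite /= mulrCA.
Qed.

Lemma qscaleA a b (A : qop) : qscale a (qscale b A) = qscale (a * b) A.
Proof. by apply: qop_ext => r c; rewrite /qscale mulrA. Qed.

Lemma qscale1 (A : qop) : qscale 1 A = A.
Proof. by apply: qop_ext => r c; rewrite /qscale mul1r. Qed.

Lemma tens_ext (A B : 'I_n -> qop1) :
  (forall j r c, A j r c = B j r c) -> tens A = tens B.
Proof. by move=> AB; apply: qop_ext => r c; apply: eq_bigr => j _. Qed.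

Lemma qmul_tens (A B : 'I_n -> qop1) :
  qmul (tens A) (tens B) = tens (fun j => mul1 (A j) (B j)).
Proof.
apply: qop_ext => r c; rewrite /qmul /tens /mul1 bigA_distr_bigA /=.
by apply: eq_bigr => m _; rewrite big_split.
Qed.

Lemma qadj_tens (A : 'I_n -> qop1) : qadj (tens A) = tens (fun j => qadj1 (A j)).
Proof. by apply: qop_ext => r c; rewrite /qadj /tens rmorph_prod. Qed.

Lemma prodr_eq_nat (f g : bits n) :
  \prod_(j < n) (f j == g j)%:R = (f == g)%:R :> C.
Proof.
case: eqP => [-> | /eqP fg]; first by rewrite big1 // => j _; rewrite eqxx.
have [j fgj] : exists j, f j != g j.
  apply/existsP; apply: contraR fg; rewrite negb_exists => /forallP fg.
  by apply/eqP/ffunP => j; apply/eqP; have := fg j; rewrite negbK.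
by rewrite (bigD1 j) //= (negbTE fgj) mul0r.
Qed.

Lemma qid_tens : @qid R n = tens (fun _ => id1 R).
Proof. by apply: qop_ext => r c; rewrite /qid /tens prodr_eq_nat. Qed.

Lemma mul1_id1l (A : qop1) r c : mul1 (id1 R) A r c = A r c.
Proof. by case: r; rewrite /mul1 big_bool /id1 /= ?mul1r ?mul0r ?addr0 ?add0r. Qed.

Lemma mul1_id1r (A : qop1) r c : mul1 A (id1 R) r c = A r c.
Proof. by case: c; rewrite /mul1 big_bool /id1 /= ?mulr1 ?mulr0 ?addr0 ?add0r. Qed.

Lemma qadj1_id1 : qadj1 (id1 R) = id1 R.
Proof.
apply/funext => r; apply/funext => c.
by rewrite /qadj1 /id1 rmorph_nat eq_sym.
Qed.


Definition pauli1 (a b : bool) : qop1 :=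
  mul1 (if a then pauliX R else id1 R) (if b then pauliZ R else id1 R).
Definition pauli (y : bits n * bits n) : qop := tens (fun j => pauli1 (y.1 j) (y.2 j)).
Definition bits_add (c a : bits n) : bits n := [ffun j => c j (+) a j].
Definition zsign (b c : bits n) : C := \prod_(j < n) (if b j && c j then -1 else 1).

Lemma weylE y : weyl R y = qscale ('i ^+ bdot y.1 y.2) (pauli y).
Proof. by []. Qed.

Lemma pauli1E a b r c :
  pauli1 a b r c = (r == c (+) a)%:R * (if b && c then -1 else 1).
Proof.
by case: a; case: b; case: r; case: c;
  rewrite /pauli1 /mul1 big_bool /= /pauliX /pauliZ /id1 /=
    ?mul0r ?mulr0 ?mul1r ?mulr1 ?addr0 ?add0r.
Qed.

Lemma pauliE a b r c : pauli (a, b) r c = (r == bits_add c a)%:R * zsign b c.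
Proof.
rewrite /pauli /tens /zsign -prodr_eq_nat -big_split /=.
by apply: eq_bigr => j _; rewrite pauli1E /bits_add ffunE.
Qed.

Lemma eq_bits_add r c a : (r == bits_add c a) = (c == bits_add r a).
Proof. by apply/eqP/eqP => ->; apply/ffunP => j; rewrite !ffunE addbK. Qed.

Lemma zsign_add b c a : zsign b (bits_add c a) = zsign b c * zsign b a.
Proof.
rewrite /zsign -big_split /=; apply: eq_bigr => j _; rewrite ffunE.
by case: (b j); case: (c j); case: (a j); rewrite /= ?mul1r ?mulrNN ?mulr1.
Qed.

Lemma zsign_bdot a b : zsign b a = (-1) ^+ bdot a b.
Proof.
rewrite /zsign /bdot -prodr_const [in RHS]big_mkcond /=.
by apply: eq_bigr => j _; rewrite inE andbC.
Qed.

Lemma conj_zsign b c : (zsign b c)^* = zsign b c.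
Proof.
rewrite /zsign rmorph_prod; apply: eq_bigr => j _.
by case: (_ && _); rewrite ?rmorphN rmorph1.
Qed.

(* The phase i^(a.b) is exactly what makes W_x Hermitian: conjugation turns it
   into (-i)^(a.b), and transposition contributes the sign (-1)^(a.b). *)
Lemma qadj_weyl y : qadj (weyl R y) = weyl R y.
Proof.
case: y => a b; apply: qop_ext => r c; rewrite /qadj !weylE /qscale !pauliE /=.
rewrite eq_bits_add; case: eqP => [-> | _]; last by rewrite !(rmorphM, rmorph0, mulr0, mul0r).
rewrite zsign_add !rmorphM /= rmorph_nat !conj_zsign rmorphXn /= conjCi [zsign b a]zsign_bdot.
by rewrite !mul1r [zsign b c * _]mulrC mulrA -exprMn mulrN1 opprK.
Qed.

Definition normalizes_weyl (U : qop) := unitary_op U /\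
  exists2 g : bits n * bits n -> bits n * bits n, injective g &
  forall y, exists2 gam : C, `|gam| = 1 &
    qmul (qmul U (weyl R y)) (qadj U) = qscale gam (weyl R (g y)).

Lemma normalizes_weyl_pauli U (g : bits n * bits n -> bits n * bits n) :
  unitary_op U -> injective g ->
  (forall y, exists2 gam : C, `|gam| = 1 &
     qmul (qmul U (pauli y)) (qadj U) = qscale gam (pauli (g y))) ->
  normalizes_weyl U.
Proof.
move=> uU g_inj Ug; split=> //; exists g => // y.
have [gam gam1 UyU] := Ug y.
have iX_neq0 k : ('i : C) ^+ k != 0 by apply: expf_neq0; exact: neq0Ci.
exists ('i ^+ bdot y.1 y.2 * gam / 'i ^+ bdot (g y).1 (g y).2).
  by rewrite !normrM normfV !normrX normCi gam1 !expr1n invr1 !mulr1.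
by rewrite !weylE qmul_scaler qmul_scalel UyU !qscaleA -!mulrA mulVf ?mulr1.
Qed.

Lemma qid_normalizes_weyl : normalizes_weyl (@qid R n).
Proof.
split; first by rewrite /unitary_op qadj_qid qmul1q.
exists id => // y; exists 1; first by rewrite normr1.
by rewrite qadj_qid qmul1q qmulq1 qscale1.
Qed.

Lemma qmul_normalizes_weyl U V :
  normalizes_weyl U -> normalizes_weyl V -> normalizes_weyl (qmul U V).
Proof.
move=> [[uU1 uU2] [g g_inj Ug]] [[uV1 uV2] [h h_inj Vh]].
split.
  split; rewrite qadj_mul.
    by rewrite qmulA -(qmulA V) uV1 qmul1q uU1.
  by rewrite qmulA -(qmulA (qadj U)) uU2 qmul1q uV2.
exists (g \o h); first exact: inj_comp.
move=> y; have [c c1 Vy] := Vh y; have [c' c'1 Uhy] := Ug (h y).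
exists (c * c'); first by rewrite normrM c1 c'1 mulr1.
have -> : qmul (qmul (qmul U V) (weyl R y)) (qadj (qmul U V)) =
          qmul (qmul U (qmul (qmul V (weyl R y)) (qadj V))) (qadj U).
  by rewrite qadj_mul !qmulA.
by rewrite Vy qmul_scaler qmul_scalel Uhy qscaleA.
Qed.

Definition set_bit (f : bits n) k (v : bool) : bits n :=
  [ffun j => if j == k then v else f j].

Lemma gate1_normalizes_weyl k (G : qop1) (g1 : bool * bool -> bool * bool) :
  (forall r c, mul1 G (qadj1 G) r c = id1 R r c) ->
  (forall r c, mul1 (qadj1 G) G r c = id1 R r c) ->
  involutive g1 ->
  (forall a b, exists2 gam : C, `|gam| = 1 & forall r c,
     mul1 (mul1 G (pauli1 a b)) (qadj1 G) r c =
     gam * pauli1 (g1 (a, b)).1 (g1 (a, b)).2 r c) ->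
  normalizes_weyl (gate1 k G).
Proof.
move=> uG1 uG2 g1K Gg1.
pose g (y : bits n * bits n) :=
  (set_bit y.1 k (g1 (y.1 k, y.2 k)).1, set_bit y.2 k (g1 (y.1 k, y.2 k)).2).
apply: (@normalizes_weyl_pauli _ g).
- rewrite /gate1 /unitary_op qadj_tens !qmul_tens qid_tens.
  by split; apply: tens_ext => j r c; case: (j == k); rewrite ?uG1 ?uG2 // qadj1_id1 mul1_id1l.
- apply: (@can_inj _ _ g g) => -[a b].
  rewrite /g /= /set_bit !ffunE eqxx /= -surjective_pairing g1K /=.
  by congr pair; apply/ffunP => j; rewrite !ffunE; case: eqP => // ->.
- move=> [a b] /=; have [gam gam1 Gab] := Gg1 (a k) (b k).
  exists gam => //; rewrite /gate1 /pauli qadj_tens !qmul_tens.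
  apply: qop_ext => r c; rewrite /qscale /tens (bigD1 k) //= [in RHS](bigD1 k) //=.
  rewrite eqxx Gab mulrA /g /set_bit /= !ffunE eqxx; congr (_ * _).
  apply: eq_bigr => j /negbTE jk; rewrite !ffunE jk.
  by rewrite qadj1_id1 mul1_id1r mul1_id1l.
Qed.

Lemma hadamard_normalizes_weyl k : normalizes_weyl (gate1 k (hadamard R)).
Proof.
set s : C := ((Num.sqrt (2 : R))%:C%C)^-1.
have s_real : s^* = s by apply/conj_Creal/ger0_real; rewrite invr_ge0 ler0c sqrtr_ge0.
have s2 : s * s * 2 = 1.
  rewrite /s -invfM -rmorphM /= -expr2 sqr_sqrtr ?ler0n //.
  by rewrite rmorph_nat mulVf // pnatr_eq0.
have hE r c : hadamard R r c = (if r && c then -1 else 1) * s by [].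
have hC r c : (hadamard R r c)^* = hadamard R r c.
  by rewrite hE rmorphM /= s_real; case: (_ && _); rewrite ?rmorphN rmorph1.
(* [ring: s2] alone does not find the negated instances of [s2]. *)
have s2N : - (s * s * 2) = -1 by rewrite s2.
clearbody s.
apply: (@gate1_normalizes_weyl k (hadamard R) (fun p => (p.2, p.1))).
1,2: by move=> r c; rewrite /mul1 /qadj1 big_bool /= !hC !hE /id1;
  case: r; case: c => /=; ring: s2 s2N.
- by case.
- move=> a b; exists (if a && b then -1 else 1).
    by case: (_ && _); rewrite ?normrN normr1.
  move=> r c; rewrite /mul1 /qadj1 !big_bool /= !hC !hE !pauli1E.
  by case: a; case: b; case: r; case: c => /=; ring: s2 s2N.
Qed.

Lemma phaseS_normalizes_weyl k : normalizes_weyl (gate1 k (phaseS R)).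
Proof.
have ii : ('i : C) * 'i = -1 by rewrite -expr2 sqrCi.
have iiN : - (('i : C) * 'i) = 1 by rewrite ii opprK.
have sE r c : phaseS R r c = (r == c)%:R * (if c then 'i else 1) by [].
have sC r c : (phaseS R r c)^* = (r == c)%:R * (if c then - 'i else 1).
  by rewrite sE rmorphM /= rmorph_nat; case: c; rewrite ?conjCi ?rmorph1.
apply: (@gate1_normalizes_weyl k (phaseS R) (fun p => (p.1, p.1 (+) p.2))).
1,2: by move=> r c; rewrite /mul1 /qadj1 big_bool /= !sC !sE /id1;
  case: r; case: c => /=; ring: ii iiN.
- by case=> a b /=; rewrite addbA addbb.
- move=> a b; exists (if a then 'i else 1).
    by case: a; rewrite ?normCi ?normr1.
  move=> r c; rewrite /mul1 /qadj1 !big_bool /= !sC !sE !pauli1E.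
  by case: a; case: b; case: r; case: c => /=; ring: ii iiN.
Qed.

Section Cnot.
Variables k l : 'I_n.
Hypothesis k_neq_l : k != l.
Local Notation pi := (cnot_map k l).

(* Conjugation by CNOT moves X-labels by [pi] and Z-labels by its transpose. *)
Definition cnot_zmap (b : bits n) : bits n :=
  [ffun j => if j == k then b k (+) b l else b j].

Let l_eq_k : (l == k) = false.
Proof. by apply/negbTE; rewrite eq_sym. Qed.

Lemma cnot_mapK : involutive pi.
Proof.
move=> c; apply/ffunP => j; rewrite /cnot_map !ffunE.
case: eqP => [-> | _] //; rewrite eqxx (negbTE k_neq_l).
by rewrite -addbA addbb addbF.
Qed.

Lemma cnot_zmapK : involutive cnot_zmap.
Proof.
move=> b; apply/ffunP => j; rewrite /cnot_zmap !ffunE.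
case: eqP => [-> | _] //; rewrite eqxx l_eq_k.
by rewrite -addbA addbb addbF.
Qed.

Lemma cnot_map_add x y : pi (bits_add x y) = bits_add (pi x) (pi y).
Proof.
apply/ffunP => j; rewrite /cnot_map /bits_add !ffunE.
by case: eqP => _ //; case: (x l); case: (y l); case: (x k); case: (y k).
Qed.

Lemma eq_cnot_map x y : (x == pi y) = (pi x == y).
Proof. by rewrite -(inj_eq (can_inj cnot_mapK)) cnot_mapK. Qed.

Lemma zsign_cnot_map b c : zsign b (pi c) = zsign (cnot_zmap b) c.
Proof.
have split_kl (F : 'I_n -> C) :
    \prod_j F j = F k * F l * \prod_(j | (j != k) && (j != l)) F j.
  by rewrite (bigD1 k) //= (bigD1 l) /= ?l_eq_k // mulrA.
rewrite /zsign !split_kl /cnot_map /cnot_zmap !ffunE !eqxx (negbTE k_neq_l) l_eq_k.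
congr (_ * _).
  by case: (b k); case: (b l); case: (c k); case: (c l); rewrite /= ?mulrNN ?mulr1 ?mul1r.
apply: eq_bigr => j /andP [/negbTE jk /negbTE jl].
by rewrite !ffunE jk jl.
Qed.

Lemma qadj_cnot : qadj (cnot R k l) = cnot R k l.
Proof. by apply: qop_ext => r c; rewrite /qadj /cnot rmorph_nat eq_cnot_map eq_sym. Qed.

Lemma cnot_conj (M : qop) :
  qmul (qmul (cnot R k l) M) (cnot R k l) = fun r c => M (pi r) (pi c).
Proof.
apply: qop_ext => r c; rewrite /qmul /cnot.
have cnotM m : \sum_m' (r == pi m')%:R * M m' m = M (pi r) m.
  by under eq_bigr do rewrite eq_cnot_map; rewrite sum_delta_sym.
by under eq_bigr do rewrite cnotM mulrC; rewrite sum_delta.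
Qed.

Lemma cnot_normalizes_weyl : normalizes_weyl (cnot R k l).
Proof.
pose g (y : bits n * bits n) := (pi y.1, cnot_zmap y.2).
apply: (@normalizes_weyl_pauli _ g).
- rewrite /unitary_op qadj_cnot.
  suff -> : qmul (cnot R k l) (cnot R k l) = @qid R n by [].
  rewrite -[X in qmul X _]qmulq1 cnot_conj.
  by apply: qop_ext => r c; rewrite /qid (inj_eq (can_inj cnot_mapK)).
- by apply: (@can_inj _ _ _ g) => -[a b]; rewrite /g /= cnot_mapK cnot_zmapK.
- move=> [a b]; exists 1; first by rewrite normr1.
  rewrite qadj_cnot cnot_conj qscale1; apply: qop_ext => r c.
  rewrite !pauliE /= zsign_cnot_map -{1}(cnot_mapK a) -cnot_map_add.
  by rewrite (inj_eq (can_inj cnot_mapK)).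
Qed.

End Cnot.

Lemma clifford_normalizes_weyl U : clifford U -> normalizes_weyl U.
Proof.
elim=> [| k V _ IH | k V _ IH | k l V kl _ IH].
- exact: qid_normalizes_weyl.
- exact: qmul_normalizes_weyl (hadamard_normalizes_weyl k) IH.
- exact: qmul_normalizes_weyl (phaseS_normalizes_weyl k) IH.
- exact: qmul_normalizes_weyl (cnot_normalizes_weyl kl) IH.
Qed.

Local Notation qvec := (qvec R n).

Lemma qapply_mul (A B : qop) (v : qvec) :
  qapply (qmul A B) v = qapply A (qapply B v).
Proof.
apply/ffunP => z; rewrite !ffunE /qmul.
under eq_bigr do rewrite big_distrl /=.
under [RHS]eq_bigr do rewrite ffunE big_distrr /=.
rewrite exchange_big /=; apply: eq_bigr => i _; apply: eq_bigr => j _.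
by rewrite mulrA.
Qed.

Lemma qapply_qscale a (M : qop) (v : qvec) : qapply (qscale a M) v = a *: qapply M v.
Proof.
apply/ffunP => z; rewrite !ffunE /qscale -[a *: _]/(a * _) big_distrr.
by apply: eq_bigr => c _; rewrite /= mulrA.
Qed.

Lemma qapplyZ (M : qop) a (v : qvec) : qapply M (a *: v) = a *: qapply M v.
Proof.
apply/ffunP => z; rewrite !ffunE -[a *: (\sum_c _)]/(a * _) big_distrr.
by apply: eq_bigr => c _; rewrite /= ffunE mulrCA.
Qed.

Lemma qapply_qid (v : qvec) : qapply (@qid R n) v = v.
Proof. by apply/ffunP => z; rewrite ffunE /qid sum_delta_sym. Qed.

Lemma braket_qadj (u : qvec) M v : braket u (qapply M v) = braket (qapply (qadj M) u) v.
Proof.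
rewrite /braket.
under eq_bigr do rewrite ffunE big_distrr /=.
under [RHS]eq_bigr do rewrite ffunE rmorph_sum big_distrl /=.
rewrite exchange_big /=; apply: eq_bigr => i _; apply: eq_bigr => j _.
by rewrite /qadj rmorphM /= conjCK mulrCA mulrA.
Qed.

Lemma braketZl a (u v : qvec) : braket (a *: u) v = a^* * braket u v.
Proof.
rewrite /braket big_distrr; apply: eq_bigr => z _.
by rewrite ffunE -[a *: _]/(a * _) rmorphM /= mulrA.
Qed.

Lemma braketZr a (u v : qvec) : braket u (a *: v) = a * braket u v.
Proof.
rewrite /braket big_distrr; apply: eq_bigr => z _.
by rewrite ffunE -[a *: _]/(a * _) mulrCA.
Qed.

Lemma braketC (u v : qvec) : braket v u = (braket u v)^*.
Proof.
rewrite /braket rmorph_sum; apply: eq_bigr => z _.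
by rewrite rmorphM /= conjCK mulrC.
Qed.

Lemma braket_ket0 (w : qvec) : braket (@ket0 R n) w = w [ffun => false].
Proof. by rewrite /braket; under eq_bigr do rewrite ffunE rmorph_nat; exact: sum_delta. Qed.

Lemma braket_unitary U (v : qvec) :
  unitary_op U -> braket (qapply U v) (qapply U v) = braket v v.
Proof. by case=> _ uU; rewrite braket_qadj -qapply_mul uU qapply_qid. Qed.

Lemma weyl_expect_real (psi : qvec) x :
  (braket psi (qapply (weyl R x) psi))^* = braket psi (qapply (weyl R x) psi).
Proof. by rewrite -braketC braket_qadj qadj_weyl. Qed.

Lemma p_psiE (psi : qvec) x :
  p_psi psi x = (2%:R ^+ n)^-1 * `|braket psi (qapply (weyl R x) psi)| ^+ 2.
Proof. by rewrite /p_psi normCK weyl_expect_real expr2. Qed.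

Lemma p_psi_ge0 (psi : qvec) x : 0 <= p_psi psi x.
Proof. by rewrite p_psiE mulr_ge0 ?exprn_ge0 // invr_ge0 exprn_ge0 // ler0n. Qed.

Lemma weyl_eigenvalue x (v : qvec) e : braket v v != 0 -> `|e| = 1 ->
  qapply (weyl R x) v = e *: v -> e = 1 \/ e = -1.
Proof.
move=> v_neq0 e1 Wv.
have e_real : e^* = e.
  apply: (mulIf v_neq0).
  by rewrite -braketZl -Wv -{1}qadj_weyl -braket_qadj Wv braketZr.
have : e ^+ 2 == 1 by rewrite expr2 -{2}e_real -normCK e1 expr1n.
by rewrite sqrf_eq1 => /orP [] /eqP ->; [left | right].
Qed.

Lemma mem_weyl_setZ x a (v : qvec) : x \in weyl_set v -> x \in weyl_set (a *: v).
Proof.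
rewrite !inE qapplyZ => /orP [] /eqP ->; first by rewrite eqxx.
by rewrite scalerN eqxx orbT.
Qed.

Lemma mem_weyl_set_eigen x (v : qvec) e : braket v v != 0 -> `|e| = 1 ->
  qapply (weyl R x) v = e *: v -> x \in weyl_set v.
Proof.
move=> v_neq0 e1 Wv; rewrite inE Wv.
by case: (weyl_eigenvalue v_neq0 e1 Wv) => ->; rewrite ?scale1r ?scaleN1r eqxx ?orbT.
Qed.

(* U v is an eigenvector of W_y' with eigenvalue gam^-1, which must be +-1. *)
Lemma mem_weyl_set_conj U y y' gam (v : qvec) :
  unitary_op U -> `|gam| = 1 -> braket v v != 0 ->
  qmul (qmul U (weyl R y)) (qadj U) = qscale gam (weyl R y') ->
  qapply (weyl R y) v = v -> y' \in weyl_set (qapply U v).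
Proof.
move=> uU gam1 v_neq0 UyU Wv.
have gam_neq0 : gam != 0 by rewrite -normr_eq0 gam1 oner_eq0.
apply: (@mem_weyl_set_eigen _ _ gam^-1); first by rewrite braket_unitary.
  by rewrite normfV gam1 invr1.
apply: (scalerI gam_neq0); rewrite scalerA mulfV // scale1r -qapply_qscale -UyU.
by rewrite !qapply_mul -(qapply_mul (qadj U)) uU.2 qapply_qid Wv.
Qed.

Lemma p_psi_conj U y y' gam (psi : qvec) : `|gam| = 1 ->
  qmul (qmul U (weyl R y)) (qadj U) = qscale gam (weyl R y') ->
  p_psi psi y' = p_psi (qapply (qadj U) psi) y.
Proof.
move=> gam1 UyU; rewrite !p_psiE; congr (_ * _ ^+ 2).
have := congr1 (fun M => braket psi (qapply M psi)) UyU.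
rewrite /= qapply_qscale braketZr !qapply_mul braket_qadj => ->.
by rewrite normrM gam1 mul1r.
Qed.

Lemma sum_zsign_mul (z z' : bits n) :
  \sum_(b : bits n) zsign b z * zsign b z' = (z == z')%:R * 2%:R ^+ n.
Proof.
rewrite /zsign; under eq_bigr do rewrite -big_split /=.
rewrite -(bigA_distr_bigA (fun j (bj : bool) =>
  (if bj && z j then -1 else 1) * (if bj && z' j then -1 else 1))) /=.
have -> : (2%:R : C) ^+ n = \prod_(j < n) 2%:R by rewrite prodr_const card_ord.
rewrite -prodr_eq_nat -big_split /=.
apply: eq_bigr => j _; rewrite big_bool /=.
by case: (z j); case: (z' j); rewrite /= ?mulrNN ?mulr1 ?mulN1r ?mul1r ?addNr ?mulr2n ?mul0r.
Qed.

Lemma parseval_zsign (u : bits n -> C) : (forall z, (u z)^* = u z) ->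
  \sum_(b : bits n) `|\sum_(z : bits n) u z * zsign b z| ^+ 2 =
  2%:R ^+ n * \sum_(z : bits n) u z ^+ 2.
Proof.
move=> u_real.
have sqr_expand b : `|\sum_(z : bits n) u z * zsign b z| ^+ 2 =
    \sum_(z : bits n) \sum_(z' : bits n) u z * u z' * (zsign b z * zsign b z').
  rewrite normCK rmorph_sum big_distrl /=; apply: eq_bigr => z _.
  rewrite big_distrr /=; apply: eq_bigr => z' _.
  by rewrite rmorphM /= u_real conj_zsign; ring.
under eq_bigr do rewrite sqr_expand.
rewrite exchange_big /=; under eq_bigr do rewrite exchange_big /=.
under eq_bigr do under eq_bigr do rewrite -big_distrr /= sum_zsign_mul.
rewrite big_distrr /=; apply: eq_bigr => z _.
rewrite (bigD1 z) //= eqxx big1 => [| z' /negbTE]; last first.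
  by rewrite eq_sym => ->; rewrite !mul0r mulr0.
by rewrite addr0 mul1r expr2; ring.
Qed.

Definition weylZ (b : bits n) : bits n * bits n := ([ffun => false], b).

Lemma weylZ_apply b (v : qvec) z : qapply (weyl R (weylZ b)) v z = zsign b z * v z.
Proof.
have bdot0 : bdot (weylZ b).1 (weylZ b).2 = 0%N.
  by apply/eqP; rewrite cards_eq0; apply/eqP/setP => j; rewrite !inE ffunE.
have add0 c : bits_add c [ffun => false] = c by apply/ffunP => j; rewrite !ffunE addbF.
rewrite ffunE; under eq_bigr => c _ do
  rewrite weylE /qscale bdot0 expr0 mul1r [weylZ b]surjective_pairing pauliE /= add0 -mulrA.
by rewrite sum_delta_sym.
Qed.

Lemma weylZ_ket0 b : qapply (weyl R (weylZ b)) (@ket0 R n) = @ket0 R n.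
Proof.
apply/ffunP => z; rewrite weylZ_apply ffunE.
case: eqP => [-> | _]; last by rewrite !mulr0.
by rewrite mulr1 /zsign big1 // => j _; rewrite ffunE andbF.
Qed.

Lemma sum_p_psi_weylZ (v : qvec) :
  \sum_(b : bits n) p_psi v (weylZ b) = \sum_(z : bits n) (`|v z| ^+ 2) ^+ 2.
Proof.
have expectZ b : braket v (qapply (weyl R (weylZ b)) v) =
    \sum_(z : bits n) `|v z| ^+ 2 * zsign b z.
  by apply: eq_bigr => z _; rewrite weylZ_apply normCKC; ring.
under eq_bigr do rewrite p_psiE expectZ.
rewrite -big_distrr /= parseval_zsign; last first.
  by move=> z; apply/conj_Creal/ger0_real; rewrite exprn_ge0.
by rewrite mulrA mulVf ?mul1r // expf_neq0 // pnatr_eq0.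
Qed.

End Weyl.

Unset Implicit Arguments.
Set Strict Implicit.

Theorem lemma5p2 (R : realType) (n : nat) (psi phi : qvec R n) :
  is_state psi ->
  stab_fidelity_maximizer psi phi ->
  fidelity phi psi ^+ 2 <= \sum_(x in weyl_set phi) p_psi psi x.
Proof.
move=> _ [[U [a [cU [a1 ->]]]] _].
have [uU [g g_inj Ug]] := clifford_normalizes_weyl cU.
set chi := qapply (qadj U) psi.
have ket0_neq0 : braket (ket0 R n) (ket0 R n) != 0.
  by rewrite braket_ket0 ffunE eqxx oner_eq0.
set T := [set g (weylZ b) | b : bits n].
have T_sub : T \subset weyl_set (a *: qapply U (ket0 R n)).
  apply/subsetP => _ /imsetP [b _ ->]; have [gam gam1 UbU] := Ug (weylZ b).
  exact/mem_weyl_setZ/(mem_weyl_set_conj uU gam1 ket0_neq0 UbU (weylZ_ket0 R b)).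
have p_g b : p_psi psi (g (weylZ b)) = p_psi chi (weylZ b).
  by have [gam gam1 UbU] := Ug (weylZ b); exact: p_psi_conj gam1 UbU.
have fidelityE : fidelity (a *: qapply U (ket0 R n)) psi = `|chi [ffun => false]| ^+ 2.
  rewrite /fidelity braketZl normrM norm_conjC a1 mul1r.
  by rewrite braketC braket_qadj -braketC braket_ket0.
rewrite fidelityE; apply: le_trans (ler_sum_subset T_sub (fun x _ => p_psi_ge0 psi x)).
rewrite big_imset /=; last by move=> b b' _ _ /g_inj [].
under eq_bigr do rewrite p_g.
rewrite sum_p_psi_weylZ (bigD1 [ffun => false]) //= lerDl.
by apply: sumr_ge0 => z _; rewrite !exprn_ge0.
Qed.
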